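(* Fix the setup in the context (system data $f,g$, state constraint set $\mathcal X$, gain $\mathbf K$, matrices $Q,P$, constant $\gamma$, disturbance level $\overline w\ge0$). There exist constants $\underline\alpha,\underline\beta\ge0$ such that the following holds. For all $\alpha\ge\underline\alpha$, $\beta\ge\underline\beta$, all $N\in\mathbb{N}$, $T>0$, $\underline t\ge0$ (with $\overline t=\underline t+NT$, $t_k=\underline t+kT$), every dynamically admissible trajectory $\mathbf x_d:[\underline t,\overline t]\to\mathbb{R}^n$ satisfying $\Omega_{\mathbf x_d}(t,\overline w)\subseteq\mathcal X$ for all $t\in[\underline t,\overline t]$, and every collection of points $\overline{\mathbf x}_0,\dots,\overline{\mathbf x}_{N-1}\in\mathcal X$: for every $k\in\{0,\dots,N-1\}$, every $t\in[t_k,t_{k+1})$ and every $\mathbf x\in\Omega_{\mathbf x_d}(t,\overline w)$, $$|k^{\rm fbl}_{\mathbf x_d}(\mathbf x,t)|\le\tfrac12\boldsymbol\sigma_{\mathbf x_d}(t)^\top M_{\alpha,\beta}\boldsymbol\sigma_{\mathbf x_d}(t)+N_{\alpha,\beta}(\overline{\mathbf x}_k)^\top\boldsymbol\sigma_{\mathbf x_d}(t)+\Gamma_{\alpha,\beta}(\overline{\mathbf x}_k),$$ where $\boldsymbol\sigma_{\mathbf x_d}(t)=\big(\|\mathbf x_d(t)-\overline{\mathbf x}_k\|_2,\ |\dot x_d^n(t)-f(\overline{\mathbf x}_k)|\big)^\top$ for $t\in[t_k,t_{k+1})$.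
   Context: System: $\dot{\mathbf x}=\mathbf f(\mathbf x)+\mathbf g(\mathbf x)u+\mathbf w(t)$ with $\mathbf x\in\mathbb{R}^n$, $u\in\mathbb{R}$, $\mathbf f(\mathbf x)=A_0\mathbf x+e_nf(\mathbf x)$, $\mathbf g(\mathbf x)=e_ng(\mathbf x)$, where $A_0=\begin{bmatrix}\mathbf 0&I\\0&\mathbf 0^\top\end{bmatrix}\in\mathbb{R}^{n\times n}$, $e_n$ is the last standard basis vector, and $f,g:\mathbb{R}^n\to\mathbb{R}$ are continuously differentiable with $f(\mathbf 0)=0$, $g(\mathbf x)\ne0$ for all $\mathbf x$. A dynamically admissible trajectory is a piecewise continuously differentiable $\mathbf x_d:[\underline t,\overline t]\to\mathbb{R}^n$ for which there is a piecewise continuous $u_d$ with $\dot{\mathbf x}_d=\mathbf f(\mathbf x_d)+\mathbf g(\mathbf x_d)u_d$ almost everywhere; $\dot x_d^n(t)$ is the $n$-th component of $\dot{\mathbf x}_d(t)$ (at the finitely many nondifferentiability points take the right derivative). $\mathcal X=\{\mathbf x:\mathbf L_j^\top\mathbf x\le\ell_j,\ j=1,\dots,q\}$ is a compact convex polytope with $\mathbf 0$ in its interior. $\mathbf K\in\mathbb{R}^n$ is such that $F=A_0-e_n\mathbf K^\top$ is Hurwitz; $Q\in\mathbb{S}^n_{\succ0}$ and $P\in\mathbb{S}^n_{\succ0}$ is the unique solution of $F^\top P+PF=-Q$; $\gamma=4\lambda_{\max}(P)^3/\lambda_{\min}(Q)^2$; $\overline e=\sqrt{\gamma\overline w^2/\lambda_{\min}(P)}$.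 $\Omega_{\mathbf x_d}(t,\overline w)=\{\mathbf x:(\mathbf x-\mathbf x_d(t))^\top P(\mathbf x-\mathbf x_d(t))\le\gamma\overline w^2\}$. Controller: $k^{\rm fbl}_{\mathbf x_d}(\mathbf x,t)=g(\mathbf x)^{-1}\big(-(f(\mathbf x)-\dot x_d^n(t))-\mathbf K^\top(\mathbf x-\mathbf x_d(t))\big)$. For $\alpha,\beta\ge0$: $M_{\alpha,\beta}=\pi_{\rm PSD}\!\left(\begin{bmatrix}2\alpha\beta&\beta\\\beta&0\end{bmatrix}\right)$, where $\pi_{\rm PSD}$ is the projection of a symmetric matrix onto the positive semidefinite cone (keeping nonnegative eigenvalues, zeroing negative ones); $N_{\alpha,\beta}(\overline{\mathbf x})=\big(2\alpha\beta\overline e+\alpha|g(\overline{\mathbf x})^{-1}|+\beta\|\mathbf K\|_2\overline e,\ |g(\overline{\mathbf x})^{-1}|+\beta\overline e\big)^\top$; $\Gamma_{\alpha,\beta}(\overline{\mathbf x})=\overline e(\beta\overline e+|g(\overline{\mathbf x})^{-1}|)(\alpha+\|\mathbf K\|_2)$. *)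

From HB Require Import structures.
From mathcomp Require Import all_boot all_order all_algebra.
From mathcomp Require Import all_classical all_reals all_analysis.
Set Implicit Arguments. Unset Strict Implicit. Unset Printing Implicit Defensive.
Import Order.TTheory GRing.Theory Num.Theory.
Import numFieldNormedType.Exports.
Local Open Scope classical_set_scope.
Local Open Scope ring_scope.

Definition norm2 {R : realType} {m : nat} (v : 'cV[R]_m) : R :=
  Num.sqrt (\sum_(i < m) v i 0 ^+ 2).

Definition quad {R : realType} {m : nat} (A : 'M[R]_m) (x : 'cV[R]_m) : R :=
  (x^T *m A *m x) 0 0.

Definition posdef {R : realType} {m : nat} (A : 'M[R]_m) : Prop :=
  A^T = A /\ forall x : 'cV[R]_m, x != 0 -> 0 < quad A x.

Definition lmax {R : realType} {m : nat} (A : 'M[R]_m) : R :=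
  sup [set a : R | eigenvalue A a].
Definition lmin {R : realType} {m : nat} (A : 'M[R]_m) : R :=
  inf [set a : R | eigenvalue A a].

(* Hurwitz: every (complex) eigenvalue a + i b of the real matrix F has a < 0.
   The complex eigen-equation F (u + i v) = (a + i b)(u + i v), (u,v) <> 0,
   is written out in real coordinates. *)
Definition hurwitz {R : realType} {m : nat} (F : 'M[R]_m) : Prop :=
  forall (a b : R) (u v : 'cV[R]_m), (u != 0 \/ v != 0) ->
    F *m u = a *: u - b *: v -> F *m v = b *: u + a *: v -> a < 0.

Definition piPSD {R : realType} {m : nat} (A : 'M[R]_m) : 'M[R]_m :=
  xget 0 [set X : 'M[R]_m | exists (U : 'M[R]_m) (d : 'rV[R]_m),
    [/\ U *m U^T = 1%:M, A = U *m diag_mx d *m U^T &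
        X = U *m diag_mx (\row_i Num.max (d 0 i) 0) *m U^T]].

Definition vec2 {R : realType} (a b : R) : 'cV[R]_2 :=
  \col_(i < 2) (if (i == 0 :> nat) then a else b).

Definition A0 {R : realType} (n : nat) : 'M[R]_n.+1 :=
  \matrix_(i, j) ((j : nat) == i.+1)%:R.

Definition en {R : realType} (n : nat) : 'cV[R]_n.+1 := delta_mx ord_max 0.

Definition fvec {R : realType} {n : nat} (f : 'cV[R]_n.+1 -> R) (x : 'cV[R]_n.+1)
  : 'cV[R]_n.+1 := A0 n *m x + f x *: en n.
Definition gvec {R : realType} {n : nat} (g : 'cV[R]_n.+1 -> R) (x : 'cV[R]_n.+1)
  : 'cV[R]_n.+1 := g x *: en n.

Definition C1 {R : realType} {m : nat} (h : 'cV[R]_m -> R) : Prop :=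
  (forall x, differentiable h x) /\ (forall v : 'cV[R]_m, continuous (fun x => 'd h x v)).

Definition polytope {R : realType} {m q : nat} (L : 'I_q -> 'cV[R]_m) (ell : 'I_q -> R)
  : set 'cV[R]_m := [set x | forall j, ((L j)^T *m x) 0 0 <= ell j].

Definition is_partition {R : realType} (a b : R) (s : seq R) : Prop :=
  [/\ (1 < size s)%N, head 0 s = a, last 0 s = b & sorted <%R s].

(* piecewise continuous on [a,b]: on each open piece the function is continuous
   with finite one-sided limits at the ends (= coincides there with a function
   continuous on the closed piece) *)
Definition piecewise_continuous {R : realType} (a b : R) (u : R -> R) : Prop :=
  exists s, is_partition a b s /\ forall i, (i.+1 < size s)%N ->
    exists U : R -> R, {within `[nth 0 s i, nth 0 s i.+1], continuous U} /\
      forall t, nth 0 s i < t < nth 0 s i.+1 -> u t = U t.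

Definition piecewise_C1 {R : realType} {m : nat} (a b : R) (x : R -> 'cV[R]_m) : Prop :=
  {within `[a, b], continuous x} /\
  exists s, is_partition a b s /\ forall i, (i.+1 < size s)%N ->
    (forall t, nth 0 s i < t < nth 0 s i.+1 -> derivable x t 1) /\
    exists D : R -> 'cV[R]_m, {within `[nth 0 s i, nth 0 s i.+1], continuous D} /\
      forall t, nth 0 s i < t < nth 0 s i.+1 -> derive1 x t = D t.

Definition dyn_admissible {R : realType} {n : nat} (f g : 'cV[R]_n.+1 -> R)
  (a b : R) (xd : R -> 'cV[R]_n.+1) : Prop :=
  piecewise_C1 a b xd /\
  exists ud : R -> R, piecewise_continuous a b ud /\
    {ae (@lebesgue_measure R), forall t, t \in `[a, b] ->
       derivable xd t 1 /\ derive1 xd t = fvec f (xd t) + ud t *: gvec g (xd t)}.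

Definition rderiv {R : realType} (h : R -> R) (t : R) : R :=
  lim ((h (t + s) - h t) / s @[s --> 0^'+]).

(* \dot x_d^n(t): n-th component of the derivative (right derivative, which
   coincides with the derivative wherever x_d is differentiable) *)
Definition xd_dot_n {R : realType} {n : nat} (xd : R -> 'cV[R]_n.+1) (t : R) : R :=
  rderiv (fun s => xd s ord_max 0) t.

Definition gamma {R : realType} {m : nat} (P Q : 'M[R]_m) : R :=
  4 * lmax P ^+ 3 / lmin Q ^+ 2.

Definition ebar {R : realType} {m : nat} (P Q : 'M[R]_m) (wbar : R) : R :=
  Num.sqrt (gamma P Q * wbar ^+ 2 / lmin P).

Definition Omega {R : realType} {m : nat} (P Q : 'M[R]_m) (xd : R -> 'cV[R]_m)
  (t wbar : R) : set 'cV[R]_m :=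
  [set x | quad P (x - xd t) <= gamma P Q * wbar ^+ 2].

Definition kfbl {R : realType} {n : nat} (f g : 'cV[R]_n.+1 -> R) (K : 'cV[R]_n.+1)
  (xd : R -> 'cV[R]_n.+1) (x : 'cV[R]_n.+1) (t : R) : R :=
  (g x)^-1 * (- (f x - xd_dot_n xd t) - (K^T *m (x - xd t)) 0 0).

Definition Mab {R : realType} (alpha beta : R) : 'M[R]_2 :=
  piPSD (\matrix_(i < 2, j < 2)
           (if (i + j == 0)%N then 2 * alpha * beta
            else if (i + j == 1)%N then beta else 0)).

Definition Nab {R : realType} {m : nat} (g : 'cV[R]_m -> R) (K : 'cV[R]_m)
  (e alpha beta : R) (xb : 'cV[R]_m) : 'cV[R]_2 :=
  vec2 (2 * alpha * beta * e + alpha * `|(g xb)^-1| + beta * norm2 K * e)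
       (`|(g xb)^-1| + beta * e).

Definition Gammaab {R : realType} {m : nat} (g : 'cV[R]_m -> R) (K : 'cV[R]_m)
  (e alpha beta : R) (xb : 'cV[R]_m) : R :=
  e * (beta * e + `|(g xb)^-1|) * (alpha + norm2 K).

Definition sigma {R : realType} {n : nat} (f : 'cV[R]_n.+1 -> R)
  (xd : R -> 'cV[R]_n.+1) (xb : 'cV[R]_n.+1) (t : R) : 'cV[R]_2 :=
  vec2 (norm2 (xd t - xb)) `|xd_dot_n xd t - f xb|.

From HB Require Import structures.
From mathcomp Require Import all_boot all_order all_algebra.
From mathcomp Require Import all_classical all_reals all_analysis.
From mathcomp Require Import ring lra.
Import Order.TTheory GRing.Theory Num.Theory.
Import numFieldNormedType.Exports.
Local Open Scope classical_set_scope.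
Local Open Scope ring_scope.

(* On the compact convex polytope X the C^1 functions f and g are Lipschitz for
   the Euclidean norm (mean value theorem along segments, the differential being
   bounded on X by compactness); since g does not vanish, 1/g is bounded on X and
   therefore Lipschitz as well.  Their Lipschitz constants are alpha0 and beta0.
   A point x of Omega lies within ebar of x_d(t) (Rayleigh bound with lmin P), so
   within ebar + sigma_1 of the sample point, and bounding the two factors of
   k^fbl by the Lipschitz estimates gives a product that expands exactly into the
   claimed right-hand side, once one knows that the projection onto the PSD cone
   does not decrease the quadratic form (2x2 symmetric matrices are orthogonally
   diagonalisable). *)

Section EuclideanNorm.
Context {R : realType} {m : nat}.
Implicit Types u v : 'cV[R]_m.

Lemma sumsq_ge0 v : 0 <= \sum_i v i 0 ^+ 2.
Proof. by apply: sumr_ge0 => i _; exact: sqr_ge0. Qed.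

Lemma sumsq_eq0 v : \sum_i v i 0 ^+ 2 = 0 -> v = 0.
Proof.
move=> /(psumr_eq0P (fun i _ => sqr_ge0 (v i 0))) v0.
by apply/matrixP => i j; rewrite ord1 mxE; apply/eqP; rewrite -sqrf_eq0 v0.
Qed.

Lemma norm2_ge0 v : 0 <= norm2 v.
Proof. exact: sqrtr_ge0. Qed.

Lemma norm2_sq v : norm2 v ^+ 2 = \sum_i v i 0 ^+ 2.
Proof. by rewrite sqr_sqrtr // sumsq_ge0. Qed.

Lemma norm20 : norm2 (0 : 'cV[R]_m) = 0.
Proof. by rewrite /norm2 big1 ?sqrtr0 // => i _; rewrite mxE expr0n. Qed.

Lemma norm2_gt0 v : v != 0 -> 0 < norm2 v.
Proof.
move=> v0; rewrite lt_neqAle norm2_ge0 andbT eq_sym.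
apply: contra v0 => /eqP n0; apply/eqP/sumsq_eq0.
by rewrite -norm2_sq n0 expr0n.
Qed.

Lemma norm2Z (c : R) v : norm2 (c *: v) = `|c| * norm2 v.
Proof.
rewrite /norm2 -sqrtr_sqr -sqrtrM ?sqr_ge0 // mulr_sumr.
by congr Num.sqrt; apply: eq_bigr => i _; rewrite mxE exprMn.
Qed.

Lemma coord_le_norm2 v i : `|v i 0| <= norm2 v.
Proof.
rewrite -(sqrtr_sqr (v i 0)) /norm2 ler_sqrt ?sumsq_ge0 //.
rewrite (bigD1 i) //= lerDl.
by apply: sumr_ge0 => j _; exact: sqr_ge0.
Qed.

Lemma lagrange_identity u v :
  \sum_i \sum_j (u i 0 * v j 0 - u j 0 * v i 0) ^+ 2 =
  2 * ((\sum_i u i 0 ^+ 2) * (\sum_i v i 0 ^+ 2) - (\sum_i u i 0 * v i 0) ^+ 2).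
Proof.
set A := \sum_i u i 0 ^+ 2; set B := \sum_i v i 0 ^+ 2.
set C := \sum_i u i 0 * v i 0.
have row_sum i : \sum_j (u i 0 * v j 0 - u j 0 * v i 0) ^+ 2 =
    u i 0 ^+ 2 * B + v i 0 ^+ 2 * A - 2 * (u i 0 * v i 0) * C.
  rewrite /A /B /C !mulr_sumr -big_split -sumrB /=.
  by apply: eq_bigr => j _; ring.
rewrite (eq_bigr _ (fun i _ => row_sum i)) !big_split /= sumrN.
by rewrite -!mulr_suml -mulr_sumr -/A -/B -/C; ring.
Qed.

Lemma cauchy_schwarz u v : `|\sum_i u i 0 * v i 0| <= norm2 u * norm2 v.
Proof.
rewrite -sqrtrM ?sumsq_ge0 // -sqrtr_sqr ler_sqrt ?mulr_ge0 ?sumsq_ge0 //.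
rewrite -subr_ge0 -(pmulr_rge0 _ (ltr0Sn _ 1)) -lagrange_identity.
by apply: sumr_ge0 => i _; apply: sumr_ge0 => j _; exact: sqr_ge0.
Qed.

Lemma cauchy_schwarz_mx u v : `|(u^T *m v) 0 0| <= norm2 u * norm2 v.
Proof. by rewrite mxE; under eq_bigr do rewrite mxE; exact: cauchy_schwarz. Qed.

Lemma ler_norm2D u v : norm2 (u + v) <= norm2 u + norm2 v.
Proof.
rewrite -(ler_pXn2r (n := 2)) ?nnegrE ?addr_ge0 ?norm2_ge0 // norm2_sq.
have -> : \sum_i (u + v) i 0 ^+ 2 =
    \sum_i u i 0 ^+ 2 + \sum_i v i 0 ^+ 2 + 2 * \sum_i u i 0 * v i 0.
  by rewrite mulr_sumr -!big_split /=; apply: eq_bigr => i _; rewrite mxE; ring.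
rewrite -!norm2_sq.
have := ler_norm (\sum_i u i 0 * v i 0); have := cauchy_schwarz u v; nra.
Qed.

End EuclideanNorm.

Section QuadraticForm.
Context {R : realType} {m : nat}.
Implicit Types (x y : 'cV[R]_m) (A B : 'M[R]_m).

Lemma quadD B x y : B^T = B ->
  quad B (x + y) = quad B x + 2 * (y^T *m B *m x) 0 0 + quad B y.
Proof.
move=> BT; have sym : (x^T *m B *m y) 0 0 = (y^T *m B *m x) 0 0.
  have tr11 (M : 'M[R]_1) : M^T 0 0 = M 0 0 by rewrite mxE.
  by rewrite -tr11 !trmx_mul trmxK BT mulmxA.
have addE (M N : 'M[R]_1) : (M + N) 0 0 = M 0 0 + N 0 0 by rewrite mxE.
rewrite /quad mulmxDr [(x + y)^T]linearD /= !mulmxDl !addE sym; ring.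
Qed.

Lemma quadZ B c x : quad B (c *: x) = c ^+ 2 * quad B x.
Proof. by rewrite /quad linearZ [(c *: x)^T]linearZ /= -!scalemxAl !mxE mulrA. Qed.

Lemma quadBl A B x : quad (A - B) x = quad A x - quad B x.
Proof. by rewrite /quad mulmxBr mulmxBl !mxE. Qed.

Lemma quad_eigenvector {B} {c : R} {x} : B *m x = c *: x -> quad B x = c * norm2 x ^+ 2.
Proof.
move=> Bx; rewrite /quad -mulmxA Bx -scalemxAr mxE norm2_sq mxE; congr (_ * _).
by apply: eq_bigr => i _; rewrite mxE expr2.
Qed.

Lemma psd_quad_eq0 B x : B^T = B -> (forall y, 0 <= quad B y) ->
  quad B x = 0 -> B *m x = 0.
Proof.
move=> BT B_psd Bx0; set w := B *m x.
set W := norm2 w ^+ 2; set q := quad B w.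
have cross : (w^T *m B *m x) 0 0 = W.
  by rewrite -mulmxA -/w mxE /W norm2_sq; apply: eq_bigr => i _; rewrite mxE.
have q1 : 0 < q + 1 by have q0 : 0 <= q := B_psd w; lra.
(* Along [x + t w] the form is [2 t W + t^2 q]; at [t = - W / (q + 1)] it equals
   [- W^2 (q + 2) / (q + 1)^2], which forces [W = 0]. *)
have := B_psd (x + (- (W / (q + 1))) *: w).
rewrite quadD // Bx0 quadZ -/q linearZ /= -!scalemxAl mxE cross.
have -> : 0 + 2 * (- (W / (q + 1)) * W) + (- (W / (q + 1))) ^+ 2 * q =
    - (W ^+ 2 * (q + 2)) / (q + 1) ^+ 2 by field; rewrite gt_eqF.
rewrite pmulr_lge0 ?invr_gt0 ?exprn_gt0 // oppr_ge0 pmulr_lle0 ?sqr_ge0; last lra.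
move=> W2; apply: sumsq_eq0; rewrite -norm2_sq -/W.
by apply/eqP; rewrite -sqrf_eq0 eq_le W2 sqr_ge0.
Qed.

End QuadraticForm.

Section UnitSphere.
Context {R : realType} {m : nat}.

Lemma norm2_tr_sq (u : 'rV[R]_m) : norm2 u^T ^+ 2 = \sum_i u 0 i ^+ 2.
Proof. by rewrite norm2_sq; apply: eq_bigr => i _; rewrite mxE. Qed.

Lemma unit_sphere_compact : compact [set u : 'rV[R]_m | \sum_i u 0 i ^+ 2 = 1].
Proof.
apply: bounded_closed_compact.
  rewrite /bounded_set /bounded_near; near=> M => u /= u1.
  rewrite [`|u|]/Num.norm /= mx_normrE; apply: bigmax_le => [|[i j] _] /=.
    by near: M; apply: nbhs_pinfty_ge.
  have M1 : 1 <= M by near: M; apply: nbhs_pinfty_ge.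
  apply: le_trans M1; rewrite ord1 -(sqrtr_sqr (u 0 j)) -sqrtr1 ler_sqrt //.
  by rewrite -u1 (bigD1 j) //= lerDl; apply: sumr_ge0 => k _; exact: sqr_ge0.
apply: (@preimage_closed _ _ (fun u : 'rV[R]_m => \sum_i u 0 i ^+ 2) [set 1]).
  move=> u _; apply: (continuous_big add_continuous) => i _ v.
  by apply: continuousM; exact: coord_continuous.
exact: closed_eq.
Unshelve. all: end_near.
Qed.

Lemma quad_tr_continuous (A : 'M[R]_m) : continuous (fun u : 'rV[R]_m => quad A u^T).
Proof.
have -> : (fun u : 'rV[R]_m => quad A u^T) =
    (fun u => \sum_j \sum_i u 0 i * A i j * u 0 j).
  apply: funext => u; rewrite /quad mxE; apply: eq_bigr => j _.
  by rewrite !mxE mulr_suml; apply: eq_bigr => i _; rewrite !mxE.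
apply: (continuous_big add_continuous) => j _.
apply: (continuous_big add_continuous) => i _ u.
apply: (continuousM (s := fun u : 'rV[R]_m => u 0 i * A i j) (t := fun u => u 0 j));
  last exact: coord_continuous.
apply: (continuousM (s := fun u : 'rV[R]_m => u 0 i) (t := fun _ => A i j)).
  exact: coord_continuous.
exact: cst_continuous.
Qed.

End UnitSphere.

Section Rayleigh.
Context {R : realType} {m : nat}.

Lemma quad_min_on_unit_sphere (A : 'M[R]_m.+1) :
  exists2 u0 : 'rV[R]_m.+1, \sum_i u0 0 i ^+ 2 = 1 &
    forall u : 'rV[R]_m.+1, \sum_i u 0 i ^+ 2 = 1 -> quad A u0^T <= quad A u^T.
Proof.
have e0_in : [set u : 'rV[R]_m.+1 | \sum_i u 0 i ^+ 2 = 1] (\row_j (j == 0)%:R).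
  rewrite /= (bigD1 0) //= mxE eqxx expr1n big1 ?addr0 // => i /negbTE i0.
  by rewrite mxE i0 expr0n.
have [u0 /set_mem u01 u0min] := compact_EVT_min (ex_intro _ _ e0_in)
  (@unit_sphere_compact R m.+1) (continuous_subspaceT (quad_tr_continuous A)).
by exists u0 => // u u1; apply: u0min; rewrite inE.
Qed.

Lemma posdef_least_eigenvalue (P : 'M[R]_m.+1) : posdef P ->
  exists mu, [/\ 0 < mu, eigenvalue P mu,
    forall v, mu * norm2 v ^+ 2 <= quad P v &
    forall a, eigenvalue P a -> mu <= a].
Proof.
move=> [PT P_pos]; have [u0 u01 u0min] := quad_min_on_unit_sphere P.
set mu := quad P u0^T.
have u0_nz : u0^T != 0.
  apply: contra_neq (@oner_neq0 R) => u00.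
  by rewrite -u01 -norm2_tr_sq u00 norm20 expr0n.
have rayleigh v : mu * norm2 v ^+ 2 <= quad P v.
  have [->|v0] := eqVneq v 0; first by rewrite /quad mulmx0 mxE norm20 expr0n mulr0.
  have s0 := norm2_gt0 v v0.
  have := u0min ((norm2 v)^-1 *: v)^T.
  rewrite -norm2_tr_sq trmxK norm2Z ger0_norm ?invr_ge0 ?(ltW s0) //.
  rewrite mulVf ?gt_eqF // expr1n => /(_ erefl).
  by rewrite quadZ exprVn mulrC ler_pdivlMr ?exprn_gt0.
exists mu; split => //.
- exact: P_pos.
- have quad_mu (v : 'cV[R]_m.+1) : quad mu%:M v = mu * norm2 v ^+ 2.
    exact/quad_eigenvector/mul_scalar_mx.
  have Pmu_sym : (P - mu%:M)^T = P - mu%:M by rewrite linearB /= PT tr_scalar_mx.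
  have Pmu_psd v : 0 <= quad (P - mu%:M) v by rewrite quadBl quad_mu subr_ge0.
  have Pmu_u0 : quad (P - mu%:M) u0^T = 0.
    by rewrite quadBl quad_mu norm2_tr_sq u01 mulr1 subrr.
  move: (psd_quad_eq0 _ _ Pmu_sym Pmu_psd Pmu_u0).
  rewrite mulmxBl mul_scalar_mx => /eqP; rewrite subr_eq0 => /eqP Pu0.
  apply/eigenvalueP; exists u0; last by apply: contra_neq u0_nz => ->; rewrite trmx0.
  by apply: trmx_inj; rewrite trmx_mul PT Pu0 linearZ.
- move=> a /eigenvalueP [u uP u_nz].
  have uT_nz : u^T != 0 by apply: contra_neq u_nz => uT0; rewrite -[u]trmxK uT0 trmx0.
  have Pu : P *m u^T = a *: u^T by rewrite -PT -trmx_mul uP linearZ.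
  have := rayleigh u^T; rewrite (quad_eigenvector Pu).
  by rewrite ler_pM2r // exprn_gt0 // norm2_gt0.
Qed.

End Rayleigh.

Lemma lmin_posdef {R : realType} {m : nat} (P : 'M[R]_m.+1) : posdef P ->
  0 < lmin P /\ forall v, lmin P * norm2 v ^+ 2 <= quad P v.
Proof.
move=> /posdef_least_eigenvalue [mu [mu0 mu_eig rayleigh mu_least]].
suff -> : lmin P = mu by [].
apply/le_anti/andP; split.
  by apply: ge_inf => //; exists mu => a /mu_least.
by apply: lb_le_inf; [exists mu | move=> a /mu_least].
Qed.

Lemma norm2_le_quad_posdef {R : realType} {m : nat} (P : 'M[R]_m.+1) v (c : R) :
  posdef P -> quad P v <= c -> norm2 v <= Num.sqrt (c / lmin P).
Proof.
move=> /lmin_posdef [lmin0 rayleigh] Pv.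
rewrite -(ger0_norm (norm2_ge0 v)) -sqrtr_sqr ler_wsqrtr // ler_pdivlMr // mulrC.
exact: le_trans (rayleigh v) Pv.
Qed.

Lemma Omega_dist_le_ebar {R : realType} {n : nat} (P Q : 'M[R]_n.+1) xd (t wbar : R) x :
  posdef P -> Omega P Q xd t wbar x -> norm2 (x - xd t) <= ebar P Q wbar.
Proof. exact: norm2_le_quad_posdef. Qed.

Section TwoByTwo.
Context {R : realType}.

Definition mx2 (a b c d : R) : 'M[R]_2 :=
  \matrix_(i, j) if i == 0 then (if j == 0 then a else b) else (if j == 0 then c else d).

Lemma ord2_neq0 (i : 'I_2) : i != 0 -> i = 1.
Proof. by case: i => [[|[|//]] ?] //= _; exact: val_inj. Qed.

Lemma mx2E (A : 'M[R]_2) : A = mx2 (A 0 0) (A 0 1) (A 1 0) (A 1 1).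
Proof.
apply/matrixP => i j; rewrite mxE.
by case: eqP => [->|/eqP/ord2_neq0 ->]; case: eqP => [->|/eqP/ord2_neq0 ->].
Qed.

Lemma mulmx2 a b c d a' b' c' d' :
  mx2 a b c d *m mx2 a' b' c' d' =
  mx2 (a * a' + b * c') (a * b' + b * d') (c * a' + d * c') (c * b' + d * d').
Proof.
by rewrite [LHS]mx2E !mxE !big_ord_recr !big_ord0 /= !mxE /= !add0r.
Qed.

Lemma trmx2 a b c d : (mx2 a b c d)^T = mx2 a c b d.
Proof. by rewrite [LHS]mx2E !mxE. Qed.

Lemma scalar_mx2 (a : R) : a%:M = mx2 a 0 0 a.
Proof. by rewrite [LHS]mx2E !mxE. Qed.

Lemma diag_mx2 (l1 l2 : R) :
  diag_mx (\row_(i < 2) if i == 0 then l1 else l2) = mx2 l1 0 0 l2.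
Proof. by rewrite [LHS]mx2E !mxE. Qed.

Lemma quad_mx2 a b c d (s t : R) :
  quad (mx2 a b c d) (vec2 s t) = a * s ^+ 2 + (b + c) * s * t + d * t ^+ 2.
Proof.
rewrite /quad mxE !big_ord_recr !big_ord0 /= !mxE.
by rewrite !big_ord_recr !big_ord0 /= !mxE /=; ring.
Qed.

Lemma vec2_dot (a b c d : R) : ((vec2 a b)^T *m vec2 c d) 0 0 = a * c + b * d.
Proof. by rewrite mxE !big_ord_recr big_ord0 /= !mxE /= add0r. Qed.

Lemma sym2_rotation (a b c : R) : exists x y l1 l2 : R,
  [/\ x ^+ 2 + y ^+ 2 = 1, x ^+ 2 * l1 + y ^+ 2 * l2 = a,
      x * y * (l1 - l2) = b & y ^+ 2 * l1 + x ^+ 2 * l2 = c].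
Proof.
have [->|b0] := eqVneq b 0; first by exists 1, 0, a, c; split; ring.
set r := Num.sqrt ((a - c) ^+ 2 + 4 * b ^+ 2).
have r2 : r ^+ 2 = (a - c) ^+ 2 + 4 * b ^+ 2.
  by rewrite sqr_sqrtr // addr_ge0 ?sqr_ge0 // mulr_ge0 ?sqr_ge0.
(* [l1] is the larger eigenvalue and [(b, l1 - a)] an eigenvector for it. *)
set l1 := (a + c + r) / 2; set p := l1 - a.
set s := Num.sqrt (b ^+ 2 + p ^+ 2).
have s0 : s != 0.
  have b2 : 0 < b ^+ 2 by rewrite exprn_even_gt0 //= b0 orbT.
  by rewrite gt_eqF // sqrtr_gt0 (lt_le_trans b2) // lerDl sqr_ge0.
have S0 : s ^+ 2 - (b ^+ 2 + p ^+ 2) = 0.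
  by rewrite sqr_sqrtr ?subrr // addr_ge0 ?sqr_ge0.
have D0 : p * (l1 - c) - b ^+ 2 = 0.
  have -> : p * (l1 - c) - b ^+ 2 = (r ^+ 2 - ((a - c) ^+ 2 + 4 * b ^+ 2)) / 4.
    by rewrite /p /l1; field.
  by rewrite r2 subrr mul0r.
set S := s ^+ 2 - _ in S0; set D := p * _ - _ in D0.
(* Cleared of the denominator [s^2], each of the four equations is a combination
   of the characteristic equation [D = 0] and the normalisation [S = 0]. *)
have eq_by (u v w : R) : u - v = w / s ^+ 2 -> w = 0 -> u = v.
  by move=> uvw w0; apply/eqP; rewrite -subr_eq0 uvw w0 mul0r.
exists (b / s), (p / s), l1, (a + c - l1); split.
- by apply: (eq_by _ _ (- S)); [rewrite /S; field | rewrite S0 oppr0].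
- apply: (eq_by _ _ (- p * D - a * S)); last by rewrite D0 S0; ring.
  by rewrite /D /S /p; field.
- apply: (eq_by _ _ (b * D - b * S)); last by rewrite D0 S0; ring.
  by rewrite /D /S /p; field.
- apply: (eq_by _ _ (p * D - c * S)); last by rewrite D0 S0; ring.
  by rewrite /D /S /p; field.
Qed.

Lemma sym2_orthodiag (a b c : R) :
  exists (U : 'M[R]_2) (d : 'rV[R]_2),
    U *m U^T = 1%:M /\ mx2 a b b c = U *m diag_mx d *m U^T.
Proof.
have [x [y [l1 [l2 [xy1 eq_a eq_b eq_c]]]]] := sym2_rotation a b c.
exists (mx2 x (- y) y x), (\row_(i < 2) if i == 0 then l1 else l2).
rewrite diag_mx2 trmx2 !mulmx2 scalar_mx2 -eq_a -eq_b -eq_c.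
by split; congr mx2; rewrite -?xy1; ring.
Qed.

End TwoByTwo.

Lemma quad_le_piPSD {R : realType} {m : nat} (A : 'M[R]_m) x :
  (exists (U : 'M[R]_m) (d : 'rV[R]_m),
     U *m U^T = 1%:M /\ A = U *m diag_mx d *m U^T) ->
  quad A x <= quad (piPSD A) x.
Proof.
have quad_diag (U : 'M[R]_m) d :
    quad (U *m diag_mx d *m U^T) x = \sum_i d 0 i * (U^T *m x) i 0 ^+ 2.
  rewrite /quad -!mulmxA mulmxA -[x^T *m U]trmxK trmx_mul trmxK mxE.
  by apply: eq_bigr => i _; rewrite mul_diag_mx !mxE; ring.
move=> [U [d [UU A_eq]]]; rewrite /piPSD; set S := [set X | _].
have : S (xget 0 S).
  apply: xgetPex; exists (U *m diag_mx (\row_i Num.max (d 0 i) 0) *m U^T).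
  by exists U, d.
move=> [U' [d' [_ -> ->]]]; rewrite !quad_diag; apply: ler_sum => i _.
by rewrite ler_wpM2r ?sqr_ge0 // mxE le_max lexx.
Qed.

Lemma quad_Mab {R : realType} (alpha beta s1 s2 : R) :
  2 * alpha * beta * s1 ^+ 2 + 2 * beta * s1 * s2 <=
  quad (Mab alpha beta) (vec2 s1 s2).
Proof.
have -> : Mab alpha beta = piPSD (mx2 (2 * alpha * beta) beta beta 0).
  by congr piPSD; rewrite [LHS]mx2E !mxE.
apply: le_trans (quad_le_piPSD _ _ (sym2_orthodiag _ _ _)).
rewrite quad_mx2; lra.
Qed.

Lemma compact_continuous_bounded {R : realType} {T : topologicalType}
    (X : set T) (h : T -> R) : compact X -> {within X, continuous h} ->
  exists2 B, 0 <= B & forall p, X p -> `|h p| <= B.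
Proof.
move=> cX ch; have [M [_ hM]] := compact_bounded (continuous_compact ch cX).
exists (Num.max 0 (M + 1)) => [|p Xp]; first by rewrite le_max lexx.
have hpM : `|h p| <= M + 1 by apply: (hM (M + 1)); [rewrite ltrDl | exists p].
by rewrite le_max hpM orbT.
Qed.

Section LipschitzOnConvex.
Context {R : realType} {m : nat}.
Local Notation V := 'cV[R]_m.

Definition convex_cV (X : set V) : Prop :=
  forall y z (s : R), X y -> X z -> 0 <= s <= 1 -> X (y + s *: (z - y)).

Definition norm2_lipschitz (X : set V) (L : R) (h : V -> R) : Prop :=
  forall y z, X y -> X z -> `|h z - h y| <= L * norm2 (z - y).

Lemma polytope_convex {q} (L : 'I_q -> V) (ell : 'I_q -> R) :
  convex_cV (polytope L ell).
Proof.
move=> y z s Xy Xz /andP [s0 s1] j.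
have -> : ((L j)^T *m (y + s *: (z - y))) 0 0 =
    (1 - s) * ((L j)^T *m y) 0 0 + s * ((L j)^T *m z) 0 0.
  by rewrite mulmxDr -scalemxAr mulmxBr !mxE; ring.
by have := Xy j; have := Xz j; rewrite /=; nra.
Qed.

Lemma is_derive_segment (h : V -> R) (y w : V) (s : R) :
  differentiable h (y + s *: w) ->
  is_derive s 1 (fun t : R => h (y + t *: w)) ('d h (y + s *: w) w).
Proof.
move=> dh; set p := y + s *: w.
have shiftE :
    (fun t : R => t^-1 *: (((fun t : R => h (y + t *: w)) \o shift s) (t *: 1)
                           - h (y + s *: w))) =
    (fun t : R => t^-1 *: ((h \o shift p) (t *: w) - h p)).
  by apply: funext => t /=; rewrite /p [t%:A]mulr1 scalerDl addrCA.
have hd : derivable (fun t : R => h (y + t *: w)) s 1.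
  by rewrite /derivable shiftE; exact: diff_derivable.
by apply: DeriveDef => //; rewrite /derive shiftE -/(derive h p w) deriveE.
Qed.

Lemma differential_bounded (h : V -> R) (X : set V) : C1 h -> compact X ->
  exists2 B, 0 <= B & forall p v, X p -> `|'d h p v| <= B * norm2 v.
Proof.
move=> [_ dh_cont] cX.
have coord_bound (i : 'I_m) : exists2 Bi, 0 <= Bi &
    forall p, X p -> `|'d h p (delta_mx i 0 : V)| <= Bi.
  apply: (compact_continuous_bounded _ (fun p => 'd h p (delta_mx i 0 : V)) cX).
  exact: continuous_subspaceT.
have [B B0 hB] := fin_all_exists2 coord_bound.
exists (\sum_i B i) => [|p v Xp]; first by apply: sumr_ge0 => i _; exact: B0.
have -> : 'd h p v = \sum_i v i 0 * 'd h p (delta_mx i 0 : V).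
  rewrite {1}[v]matrix_sum_delta linear_sum; apply: eq_bigr => i _.
  by rewrite big_ord1 linearZ.
apply: le_trans (ler_norm_sum _ _ _) _; rewrite mulr_suml; apply: ler_sum => i _.
by rewrite normrM mulrC ler_pM ?normr_ge0 ?coord_le_norm2 //; apply: hB.
Qed.

Lemma C1_lipschitz (h : V -> R) (X : set V) : C1 h -> compact X -> convex_cV X ->
  exists2 L, 0 <= L & norm2_lipschitz X L h.
Proof.
move=> hC cX convX; have [B B0 hB] := differential_bounded _ _ hC cX.
exists B => // y z Xy Xz; set w := z - y.
set phi := fun t : R => h (y + t *: w).
have phi_der (t : R) : is_derive t (1 : R) phi ('d h (y + t *: w) w).
  by apply: is_derive_segment; case: hC.
have phi_cont : {within `[0, 1], continuous phi}.
  apply: continuous_subspaceT => t; apply: differentiable_continuous.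
  by have [phi_d _] := phi_der t; apply/derivable1_diffP.
have [c /[!in_itv] /= /andP [c0 c1] phiE] :=
  MVT ltr01 (fun t _ => phi_der t) phi_cont.
have -> : h z - h y = phi 1 - phi 0.
  by rewrite /phi scale1r scale0r addr0 /w addrCA subrr addr0.
by rewrite phiE subr0 mulr1; apply/hB/convX; rewrite ?ltW.
Qed.

End LipschitzOnConvex.

Lemma norm2_lipschitzV {R : realType} {m : nat} {X : set 'cV[R]_m}
    {h : 'cV[R]_m -> R} {L B : R} :
  (forall x, X x -> h x != 0) -> (forall x, X x -> `|(h x)^-1| <= B) ->
  norm2_lipschitz X L h -> norm2_lipschitz X (B ^+ 2 * L) (fun x => (h x)^-1).
Proof.
move=> h_nz h_inv_le h_lip y z Xy Xz.
have -> : (h z)^-1 - (h y)^-1 = - (h z - h y) * ((h z)^-1 * (h y)^-1).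
  by field; rewrite !h_nz.
rewrite normrM normrN normrM -mulrA [B ^+ 2 * _]mulrC.
rewrite ler_pM ?normr_ge0 ?mulr_ge0 ?normr_ge0 ?h_lip //.
by rewrite expr2 ler_pM ?normr_ge0 ?h_inv_le.
Qed.

Lemma kfbl_le_product {R : realType} {n : nat} (f g : 'cV[R]_n.+1 -> R)
    (K : 'cV[R]_n.+1) (xd : R -> 'cV[R]_n.+1) x t xb (e alpha beta : R) :
  0 <= alpha -> 0 <= beta -> norm2 (x - xd t) <= e ->
  `|f x - f xb| <= alpha * norm2 (x - xb) ->
  `|(g x)^-1 - (g xb)^-1| <= beta * norm2 (x - xb) ->
  `|kfbl f g K xd x t| <=
    (`|(g xb)^-1| + beta * (e + norm2 (xd t - xb))) *
    (alpha * (e + norm2 (xd t - xb)) + `|xd_dot_n xd t - f xb| + norm2 K * e).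
Proof.
move=> alpha0 beta0 x_near f_lip g_inv_lip.
have x_xb : norm2 (x - xb) <= e + norm2 (xd t - xb).
  have -> : x - xb = (x - xd t) + (xd t - xb) by rewrite addrA subrK.
  by apply: le_trans (ler_norm2D _ _) _; rewrite lerD2r.
set s1 := norm2 (xd t - xb) in x_xb *; set D := xd_dot_n xd t.
have e_s1 : 0 <= e + s1 by apply: le_trans x_xb; exact: norm2_ge0.
rewrite /kfbl normrM; apply: ler_pM; rewrite ?normr_ge0 //.
- rewrite -[(g x)^-1](subrK (g xb)^-1) addrC (le_trans (ler_normD _ _)) // lerD2l.
  exact: le_trans g_inv_lip (ler_wpM2l beta0 x_xb).
- have -> : - (f x - D) - (K^T *m (x - xd t)) 0 0 =
      - ((f x - f xb) + (f xb - D) + (K^T *m (x - xd t)) 0 0) by ring.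
  rewrite normrN; apply: le_trans (ler_normD _ _) _; apply: lerD.
    apply: le_trans (ler_normD _ _) _; rewrite [`|f xb - D|]distrC lerD2r.
    exact: le_trans f_lip (ler_wpM2l alpha0 x_xb).
  exact: le_trans (cauchy_schwarz_mx _ _) (ler_wpM2l (norm2_ge0 K) x_near).
Qed.

Lemma kfbl_product_le_bound {R : realType} {m : nat} (g : 'cV[R]_m -> R)
    (K xb : 'cV[R]_m) (e alpha beta s1 s2 : R) :
  (`|(g xb)^-1| + beta * (e + s1)) * (alpha * (e + s1) + s2 + norm2 K * e) <=
  2^-1 * quad (Mab alpha beta) (vec2 s1 s2)
    + ((Nab g K e alpha beta xb)^T *m vec2 s1 s2) 0 0 + Gammaab g K e alpha beta xb.
Proof.
(* Expanded, the product is the right-hand side with the quadratic term replaced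
   by its lower bound [quad_Mab]. *)
by have := quad_Mab alpha beta s1 s2; rewrite /Nab /Gammaab vec2_dot; lra.
Qed.

Lemma sampling_interval_sub {R : realType} {N k : nat} {T tl t : R} :
  0 < T -> (k < N)%N -> tl + k%:R * T <= t < tl + k.+1%:R * T ->
  t \in `[tl, tl + N%:R * T].
Proof.
move=> T0 kN /andP [t_ge t_lt]; rewrite in_itv /=; apply/andP; split.
  by apply: le_trans t_ge; rewrite lerDl mulr_ge0 // ltW.
apply: le_trans (ltW t_lt) _; rewrite lerD2l ler_wpM2r ?ler_nat //; exact: ltW.
Qed.

Theorem theorem1 (R : realType) (n q : nat)
  (f g : 'cV[R]_n.+1 -> R)
  (L : 'I_q -> 'cV[R]_n.+1) (ell : 'I_q -> R)
  (K : 'cV[R]_n.+1) (Q P : 'M[R]_n.+1) (wbar : R) :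
  C1 f -> C1 g -> f 0 = 0 -> (forall x, g x != 0) ->
  compact (polytope L ell) -> interior (polytope L ell) 0 ->
  hurwitz (A0 n - en n *m K^T) ->
  posdef Q -> posdef P ->
  (A0 n - en n *m K^T)^T *m P + P *m (A0 n - en n *m K^T) = - Q ->
  (forall P' : 'M[R]_n.+1,
     (A0 n - en n *m K^T)^T *m P' + P' *m (A0 n - en n *m K^T) = - Q -> P' = P) ->
  0 <= wbar ->
  exists alpha0 beta0 : R, 0 <= alpha0 /\ 0 <= beta0 /\
  forall alpha beta : R, alpha0 <= alpha -> beta0 <= beta ->
  forall (N : nat) (T tl : R), 0 < T -> 0 <= tl ->
  forall xd : R -> 'cV[R]_n.+1,
    dyn_admissible f g tl (tl + N%:R * T) xd ->
    (forall t, t \in `[tl, tl + N%:R * T] ->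
       Omega P Q xd t wbar `<=` polytope L ell) ->
  forall xb : nat -> 'cV[R]_n.+1,
    (forall k, (k < N)%N -> polytope L ell (xb k)) ->
  forall k : nat, (k < N)%N ->
  forall t : R, tl + k%:R * T <= t < tl + k.+1%:R * T ->
  forall x : 'cV[R]_n.+1, Omega P Q xd t wbar x ->
    `|kfbl f g K xd x t|
      <= 2^-1 * quad (Mab alpha beta) (sigma f xd (xb k) t)
         + ((Nab g K (ebar P Q wbar) alpha beta (xb k))^T *m sigma f xd (xb k) t) 0 0
         + Gammaab g K (ebar P Q wbar) alpha beta (xb k).
Proof.
move=> f_C1 g_C1 _ g_nz X_compact _ _ _ P_posdef _ _ _.
set X := polytope L ell; have X_convex : convex_cV X := polytope_convex L ell.
have [Lf Lf0 f_lip] := C1_lipschitz f X f_C1 X_compact X_convex.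
have [Lg Lg0 g_lip] := C1_lipschitz g X g_C1 X_compact X_convex.
have [Bg Bg0 g_inv_le] : exists2 Bg, 0 <= Bg & forall x, X x -> `|(g x)^-1| <= Bg.
  apply: (compact_continuous_bounded _ (fun x => (g x)^-1) X_compact).
  apply: continuous_subspaceT => x; apply: continuousV (g_nz x) _.
  exact: differentiable_continuous (g_C1.1 x).
have g_inv_lip := norm2_lipschitzV (fun x _ => g_nz x) g_inv_le g_lip.
exists Lf, (Bg ^+ 2 * Lg); do 2!split => //; first by rewrite mulr_ge0 ?sqr_ge0.
move=> alpha beta Lf_le beta_ge N T tl T0 _ xd _ Omega_sub xb xb_in k kN t t_in x x_in.
have Xx : X x := Omega_sub t (sampling_interval_sub T0 kN t_in) x x_in.
have Xxb : X (xb k) := xb_in k kN.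
rewrite /sigma; apply: le_trans (kfbl_product_le_bound _ _ _ _ _ _ _ _).
apply: kfbl_le_product.
- exact: le_trans Lf0 Lf_le.
- by apply: le_trans beta_ge; rewrite mulr_ge0 ?sqr_ge0.
- exact: Omega_dist_le_ebar.
- exact: le_trans (f_lip _ _ Xxb Xx) (ler_wpM2r (norm2_ge0 _) Lf_le).
- exact: le_trans (g_inv_lip _ _ Xxb Xx) (ler_wpM2r (norm2_ge0 _) beta_ge).
Qed.
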